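(* For all $x\in\mathbb{C}$ and all integers $n\ge0$, \[ \sum_{k=0}^n x^k\big(L_{2k}+(3x-2)F_{2k+2}\big)=3x^{n+1}F_{2n+2},\qquad \sum_{k=0}^n x^k\big(5F_{2k}+(3x-2)L_{2k+2}\big)=3\big(x^{n+1}L_{2n+2}-2\big), \] \[ \sum_{k=0}^n x^k\big(Q_{2k}+(3x-1)P_{2k+2}\big)=3x^{n+1}P_{2n+2},\qquad \sum_{k=0}^n x^k\big(8P_{2k}+(3x-1)Q_{2k+2}\big)=3\big(x^{n+1}Q_{2n+2}-2\big). \]
   Context: $F_n,L_n$ are the Fibonacci and Lucas numbers ($F_0=0,F_1=1,L_0=2,L_1=1$, $W_n=W_{n-1}+W_{n-2}$). $P_n,Q_n$ are the Pell and Pell–Lucas numbers: $P_0=0$, $P_1=1$, $Q_0=2$, $Q_1=2$, $W_n=2W_{n-1}+W_{n-2}$. *)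

From HB Require Import structures.
From mathcomp Require Import all_boot all_order all_algebra.
From mathcomp Require Import complex.
From mathcomp Require Import Rstruct.

Set Implicit Arguments. Unset Strict Implicit. Unset Printing Implicit Defensive.
Import Order.TTheory GRing.Theory Num.Theory.

Notation CC := (complex Rdefinitions.R).

(* Generic second-order sequence W_0 = a, W_1 = b, W_n = p W_{n-1} + W_{n-2}. *)
Fixpoint lucas_pair (p a b : nat) (n : nat) : nat * nat :=
  match n with
  | 0 => (a, b)
  | m.+1 => let: (u, v) := lucas_pair p a b m in (v, p * v + u)
  end.
Definition W (p a b n : nat) : nat := (lucas_pair p a b n).1.

Definition Fib (n : nat) : nat := W 1 0 1 n.
Definition Luc (n : nat) : nat := W 1 2 1 n.
Definition Pell (n : nat) : nat := W 2 0 1 n.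
Definition PellLuc (n : nat) : nat := W 2 2 2 n.

Lemma Fib_rec n : Fib n.+2 = Fib n.+1 + Fib n.
Proof. rewrite /Fib /W /=; case: lucas_pair => u v /=; by rewrite mul1n addnC. Qed.

(** Each summand telescopes: [x^k (a_k + (3x - c) b_(k+1)) = 3 x^(k+1) b_(k+1) - 3 x^k b_k]
    as soon as [a_k + 3 b_k = c b_(k+1)], which holds for
    [(a_k, b_k) = (L_2k, F_2k), (5 F_2k, L_2k), (Q_2k, P_2k), (8 P_2k, Q_2k)].
    These linear relations between sequences obeying [W_(m+2) = p W_(m+1) + W_m]
    hold for all [m] because both sides obey the recurrence and agree at [m = 0, 1]. *)
From mathcomp Require Import all_boot all_order all_algebra.
From mathcomp Require Import complex Rstruct ring.
Import GRing.Theory ComplexField.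

Set Implicit Arguments.

Definition recurrent (p : nat) (f : nat -> nat) := forall n, f n.+2 = p * f n.+1 + f n.

Section Recurrent.

Variable p : nat.

Lemma recurrent_W a b : recurrent p (W p a b).
Proof. by move=> n; rewrite /W /=; case: lucas_pair => u v /=; rewrite addnC. Qed.

Lemma recurrentD f g :
  recurrent p f -> recurrent p g -> recurrent p (fun n => f n + g n).
Proof. by move=> Hf Hg n; rewrite Hf Hg mulnDr addnACA. Qed.

Lemma recurrentZ c f : recurrent p f -> recurrent p (fun n => c * f n).
Proof. by move=> Hf n; rewrite Hf mulnDr mulnCA. Qed.

Lemma recurrentS f : recurrent p f -> recurrent p (fun n => f n.+1).
Proof. by move=> Hf n; apply: Hf. Qed.

Lemma recurrent_eq f g : recurrent p f -> recurrent p g ->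
  f 0 = g 0 -> f 1 = g 1 -> forall n, f n = g n.
Proof.
move=> Hf Hg f0 f1 n; suff [] : f n = g n /\ f n.+1 = g n.+1 by [].
by elim: n => [|n [IHn IHn1]] //; rewrite Hf Hg IHn IHn1.
Qed.

End Recurrent.

Lemma Luc_Fib m : Luc m + 3 * Fib m = 2 * Fib m.+2.
Proof.
exact: recurrent_eq (recurrentD (recurrent_W 1 2 1) (recurrentZ 3 (recurrent_W 1 0 1)))
  (recurrentZ 2 (recurrentS (recurrentS (recurrent_W 1 0 1)))) erefl erefl m.
Qed.

Lemma Fib_Luc m : 5 * Fib m + 3 * Luc m = 2 * Luc m.+2.
Proof.
exact: recurrent_eq (recurrentD (recurrentZ 5 (recurrent_W 1 0 1)) (recurrentZ 3 (recurrent_W 1 2 1)))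
  (recurrentZ 2 (recurrentS (recurrentS (recurrent_W 1 2 1)))) erefl erefl m.
Qed.

Lemma PellLuc_Pell m : PellLuc m + 3 * Pell m = Pell m.+2.
Proof.
exact: recurrent_eq (recurrentD (recurrent_W 2 2 2) (recurrentZ 3 (recurrent_W 2 0 1)))
  (recurrentS (recurrentS (recurrent_W 2 0 1))) erefl erefl m.
Qed.

Lemma Pell_PellLuc m : 8 * Pell m + 3 * PellLuc m = PellLuc m.+2.
Proof.
exact: recurrent_eq (recurrentD (recurrentZ 8 (recurrent_W 2 0 1)) (recurrentZ 3 (recurrent_W 2 2 2)))
  (recurrentS (recurrentS (recurrent_W 2 2 2))) erefl erefl m.
Qed.

Local Open Scope ring_scope.

Lemma telescope_geometric (R : comPzRingType) (x c d : R) (a b : nat -> R) n :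
  (forall k, a k + d * b k = c * b k.+1) ->
  \sum_(0 <= k < n) x ^+ k * (a k + (d * x - c) * b k.+1) = d * (x ^+ n * b n - b 0).
Proof.
move=> Hab; rewrite -[b 0]mul1r -(expr0 x) mulrBr.
apply: (telescope_sumr_eq (fun k => d * (x ^+ k * b k))) => // k _.
have -> : a k = c * b k.+1 - d * b k by rewrite -Hab addrK.
by rewrite exprS; ring.
Qed.

Theorem corollary7 (x : CC) (n : nat) :
  [/\ \sum_(0 <= k < n.+1) x ^+ k * ((Luc (2 * k))%:R + (3 * x - 2) * (Fib (2 * k + 2))%:R)
        = 3 * x ^+ n.+1 * (Fib (2 * n + 2))%:R,
      \sum_(0 <= k < n.+1) x ^+ k * (5 * (Fib (2 * k))%:R + (3 * x - 2) * (Luc (2 * k + 2))%:R)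
        = 3 * (x ^+ n.+1 * (Luc (2 * n + 2))%:R - 2),
      \sum_(0 <= k < n.+1) x ^+ k * ((PellLuc (2 * k))%:R + (3 * x - 1) * (Pell (2 * k + 2))%:R)
        = 3 * x ^+ n.+1 * (Pell (2 * n + 2))%:R
    & \sum_(0 <= k < n.+1) x ^+ k * (8 * (Pell (2 * k))%:R + (3 * x - 1) * (PellLuc (2 * k + 2))%:R)
        = 3 * (x ^+ n.+1 * (PellLuc (2 * n + 2))%:R - 2)].
Proof.
have mul2S_addn2 k : (2 * k + 2 = 2 * k.+1)%N by rewrite mulnSr.
have mul2S k : (2 * k.+1 = (2 * k).+2)%N by rewrite mulnSr addn2.
split; under eq_bigr do rewrite mul2S_addn2; rewrite mul2S_addn2.
- rewrite (telescope_geometric _ _ _ _ (fun k => (Luc (2 * k))%:R) (fun k => (Fib (2 * k))%:R)).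
    by rewrite muln0 subr0 mulrA.
  by move=> k; rewrite mul2S -[RHS]natrM -Luc_Fib natrD natrM.
- rewrite (telescope_geometric _ _ _ _ (fun k => 5 * (Fib (2 * k))%:R) (fun k => (Luc (2 * k))%:R)).
    by rewrite muln0.
  by move=> k; rewrite mul2S -[RHS]natrM -Fib_Luc natrD !natrM.
- rewrite (telescope_geometric _ _ _ _ (fun k => (PellLuc (2 * k))%:R) (fun k => (Pell (2 * k))%:R)).
    by rewrite muln0 subr0 mulrA.
  by move=> k; rewrite mul2S mul1r -PellLuc_Pell natrD natrM.
- rewrite (telescope_geometric _ _ _ _ (fun k => 8 * (Pell (2 * k))%:R) (fun k => (PellLuc (2 * k))%:R)).
    by rewrite muln0.
  by move=> k; rewrite mul2S mul1r -Pell_PellLuc natrD !natrM.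
Qed.
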